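(* Let $\mathbb{F}_q$ be a finite field, and let $N, L$ be integers with $1 \le L \le N/2$ and $q \ge N+L$. Let $\alpha_1,\dots,\alpha_N,f_1,\dots,f_L$ be $N+L$ pairwise distinct elements of $\mathbb{F}_q$, write $\bm\alpha=(\alpha_1,\dots,\alpha_N)$, $\bm f=(f_1,\dots,f_L)$, let $u_1,\dots,u_N\in\mathbb{F}_q$ be arbitrary nonzero elements, $\bm u=(u_1,\dots,u_N)$, and define $\bm v=(v_1,\dots,v_N)$ by $$v_j=\frac{1}{u_j}\Big(\prod_{i\in[N],\,i\neq j}(\alpha_j-\alpha_i)\Big)^{-1},\qquad j\in[N].$$ Let $\mathbf{Q}^{\bm u}_N=\mathrm{QCSA}^q_{N,L}(\bm\alpha,\bm u,\bm f)$ and $\mathbf{Q}^{\bm v}_N=\mathrm{QCSA}^q_{N,L}(\bm\alpha,\bm v,\bm f)$. Then the block-diagonal matrix $\mathbf{B}=\begin{pmatrix}\mathbf{Q}^{\bm u}_N&\mathbf{0}\\ \mathbf{0}&\mathbf{Q}^{\bm v}_N\end{pmatrix}\in\mathbb{F}_q^{2N\times 2N}$ is invertible, and the matrix $$\mathbf{M}_Q=\mathbf{S}\,\mathbf{B}^{-1}\in\mathbb{F}_q^{N\times 2N}$$ is the channel matrix of a feasible $N$-sum box over $\mathbb{F}_q$; that is, there exist $\mathbf{G},\mathbf{H}\in\mathbb{F}_q^{2N\times N}$ such that $\mathbf{G}$ is strongly self-orthogonal, the square matrix $(\mathbf{G}\ \mathbf{H})\in\mathbb{F}_q^{2N\times 2N}$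 is invertible, and $\mathbf{M}_Q=(\mathbf{0}_N\ \ \mathbf{I}_N)(\mathbf{G}\ \mathbf{H})^{-1}$. Here $\mathbf{S}\in\mathbb{F}_q^{N\times 2N}$ is the $0/1$ selection matrix $$\mathbf{S}=\left[\begin{array}{ccc|ccc} \mathbf{I}_L&\mathbf{0}_{L\times \lceil N/2\rceil}&\mathbf{0}&\mathbf{0}&\mathbf{0}&\mathbf{0}\\ \mathbf{0}&\mathbf{0}&\mathbf{I}_{\lfloor N/2\rfloor -L}&\mathbf{0}&\mathbf{0}&\mathbf{0}\\ \mathbf{0}&\mathbf{0}&\mathbf{0}&\mathbf{I}_L&\mathbf{0}_{L\times \lfloor N/2\rfloor }&\mathbf{0}\\ \mathbf{0}&\mathbf{0}&\mathbf{0}&\mathbf{0}&\mathbf{0}&\mathbf{I}_{\lceil N/2\rceil -L} \end{array}\right],$$ i.e., for $\mathbf{z}\in\mathbb{F}_q^{2N}$, $\mathbf{S}\mathbf{z}=(z_1,\dots,z_L,\ z_{L+\lceil N/2\rceil+1},\dots,z_N,\ z_{N+1},\dots,z_{N+L},\ z_{N+L+\lfloor N/2\rfloor+1},\dots,z_{2N})^\top$.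
   Context: For $\bm\alpha\in\mathbb{F}_q^{1\times n}$ with pairwise distinct entries and $\bm w=(w_1,\dots,w_n)\in\mathbb{F}_q^{1\times n}$ with nonzero entries, $\mathrm{GRS}^q_{n,k}(\bm\alpha,\bm w)$ denotes the $n\times k$ matrix whose $(i,m)$ entry is $w_i\alpha_i^{m-1}$ ($i\in[n]$, $m\in[k]$). For $\bm\beta=(\beta_1,\dots,\beta_N)$ with all $\beta_i\neq 0$, $\alpha_1,\dots,\alpha_N,f_1,\dots,f_L$ pairwise distinct, and $L\le N/2$, the matrix $\mathrm{QCSA}^q_{N,L}(\bm\alpha,\bm\beta,\bm f)\in\mathbb{F}_q^{N\times N}$ has $(i,j)$ entry $\frac{\beta_i}{f_j-\alpha_i}$ for $j\in[L]$ and $(i,L+k)$ entry $\beta_i\alpha_i^{k-1}$ for $k\in[N-L]$ (so its columns $L+1,\dots,L+\lceil N/2\rceil$ form $\mathrm{GRS}^q_{N,\lceil N/2\rceil}(\bm\alpha,\bm\beta)$). A matrix $\mathbf{G}\in\mathbb{F}_q^{2N\times N}$ is strongly self-orthogonal (SSO) iff $\mathrm{rk}(\mathbf{G})=N$ and $\mathbf{G}^\top\mathbf{J}\mathbf{G}=\mathbf{0}$, where $\mathbf{J}=\begin{pmatrix}\mathbf{0}&-\mathbf{I}_N\\ \mathbf{I}_N&\mathbf{0}\end{pmatrix}$. $\lfloor\cdot\rfloor,\lceil\cdot\rceil$ denote floor and ceiling; blocks of size zero are empty. *)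

From HB Require Import structures.
From mathcomp Require Import all_boot all_order all_algebra all_field.
Set Implicit Arguments. Unset Strict Implicit. Unset Printing Implicit Defensive.
Import GRing.Theory.
Local Open Scope ring_scope.

(* Indices are 0-based: row/column i : 'I_n corresponds to the paper's i+1. *)

Definition QCSA (F : fieldType) (N L : nat) (alpha beta : 'I_N -> F)
    (f : 'I_L -> F) : 'M[F]_N :=
  \matrix_(i < N, j < N)
    match @insub nat (fun k => k < L)%N _ (val j) with
    | Some j' => beta i / (f j' - alpha i)
    | None => beta i * alpha i ^+ (val j - L)
    end.

Definition dual_weights (F : fieldType) (N : nat) (alpha u : 'I_N -> F) :
    'I_N -> F :=
  fun j => (u j)^-1 * (\prod_(i < N | i != j) (alpha j - alpha i))^-1.

Definition Jmx (F : fieldType) (N : nat) : 'M[F]_(N + N) :=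
  block_mx 0 (- 1%:M) 1%:M 0.

Definition SSO (F : fieldType) (N : nat) (G : 'M[F]_(N + N, N)) : Prop :=
  \rank G = N /\ G^T *m Jmx F N *m G = 0.

(* Column (0-based) selected by row r of S. ceil(N/2) = N - N./2. *)
Definition sel_col (N L r : nat) : nat :=
  if (r < L)%N then r
  else if (r < N./2)%N then (r + (N - N./2))%N
  else if (r < N./2 + L)%N then (N + (r - N./2))%N
  else (N + r)%N.

Definition selS (F : fieldType) (N L : nat) : 'M[F]_(N, N + N) :=
  \matrix_(r < N, c < N + N) ((val c == sel_col N L r)%:R : F).

(* 1. QCSA(alpha, beta, f) is invertible (QCSA_unit): column j is, up to the
      row factors beta_i / D(alpha_i) with D = prod_k (X - f_k), the vector of
      values at the alpha_i of a polynomial T_j of size <= N, and the T_j are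
      linearly independent; a kernel vector thus yields a polynomial of size
      <= N with N distinct roots.  Hence B = diag(Qu, Qv) is invertible.
   2. Lagrange's identity sum_x a_x^m / prod_{j != x} (a_x - a_j) = 0 for
      m <= N - 2 makes the Vandermonde columns of Qu and Qv of total degree
      <= N - 2 orthogonal (QCSA_dual_orthogonal).
   3. Reorder the columns of B by a permutation P so that B P^T = (G H), where
      H consists of the columns picked by S and G of the remaining Vandermonde
      columns, the first ceil(N/2) from Qu and the last floor(N/2) from Qv.
      Then (G H)^-1 = P B^-1, so (0 I)(G H)^-1 = S B^-1 (selS_reorder); G has
      full rank as a block of an invertible matrix, and G^T J G = 0 because
      the Qu-part and the Qv-part of G are orthogonal by step 2. *)

From HB Require Import structures.
From mathcomp Require Import all_boot all_order all_algebra all_field.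
From mathcomp Require Import fingroup perm zify ring.
Set Implicit Arguments. Unset Strict Implicit.
Import GRing.Theory.
Local Open Scope ring_scope.

Lemma poly_eq0_at_distinct (F : fieldType) n (a : 'I_n -> F) (p : {poly F}) :
  injective a -> (size p <= n)%N -> (forall i, p.[a i] = 0) -> p = 0.
Proof.
move=> a_inj size_p p_a.
apply: (@roots_geq_poly_eq0 _ _ [seq a i | i <- enum 'I_n]).
- by apply/allP => _ /mapP [i _ ->]; apply/eqP.
- by rewrite map_inj_uniq ?enum_uniq.
- by rewrite size_map size_enum_ord.
Qed.

Section NodePolynomials.
Variables (F : fieldType) (n : nat) (a : 'I_n -> F).

Definition node_poly (x : 'I_n) : {poly F} :=
  \prod_(j < n | j != x) ('X - (a j)%:P).

Definition node_prod (x : 'I_n) : F := \prod_(j < n | j != x) (a x - a j).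

Lemma node_prod_neq0 x : injective a -> node_prod x != 0.
Proof.
move=> a_inj; apply/prodf_neq0 => j j_neq_x; rewrite subr_eq0.
by apply: contra j_neq_x => /eqP/a_inj ->.
Qed.

Lemma horner_node_poly x y :
  (node_poly x).[a y] = if x == y then node_prod y else 0.
Proof.
rewrite /node_poly horner_prod; case: eqP => [->|/eqP x_neq_y].
  by apply: eq_bigr => j _; rewrite hornerXsubC.
by rewrite (bigD1 y) 1?eq_sym //= hornerXsubC subrr mul0r.
Qed.

Lemma size_node_poly x : size (node_poly x) = n.
Proof.
rewrite /node_poly -big_filter -(big_map a xpredT (fun z => 'X - z%:P)).
rewrite size_prod_XsubC size_map -cardE cardC1 card_ord.
by case: n x => [[]|].
Qed.

Lemma lead_node_poly x : (node_poly x)`_n.-1 = 1.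
Proof.
have /monicP := monic_prod_XsubC (index_enum 'I_n) (fun j => j != x) a.
by rewrite lead_coefE -/(node_poly x) size_node_poly.
Qed.

End NodePolynomials.

(* Lagrange's identity: for pairwise distinct a_1..a_n and m <= n - 2,
   sum_x a_x^m / prod_{j != x} (a_x - a_j) = 0.  The polynomial
   sum_x (a_x^m / node_prod x) node_poly x - X^m interpolates zero at the n
   nodes, hence vanishes; its coefficient of X^(n-1) is the sum. *)
Lemma lagrange_power_sum (F : fieldType) n (a : 'I_n -> F) m :
  injective a -> (m.+2 <= n)%N ->
  \sum_(x < n) a x ^+ m / node_prod a x = 0.
Proof.
move=> a_inj m_lt.
pose p := \sum_(x < n) (a x ^+ m / node_prod a x) *: node_poly a x - 'X^m.
have size_p : (size p <= n)%N.
  apply: leq_trans (size_polyD _ _) _; rewrite geq_max size_polyN size_polyXn.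
  rewrite (ltnW m_lt) andbT.
  apply: (big_ind (fun q : {poly F} => size q <= n)%N); rewrite ?size_poly0 //.
    by move=> q1 q2 h1 h2; apply: leq_trans (size_polyD _ _) _; rewrite geq_max h1 h2.
  by move=> x _; rewrite (leq_trans (size_scale_leq _ _)) ?size_node_poly.
have p_nodes y : p.[a y] = 0.
  rewrite hornerD hornerN hornerXn horner_sum (bigD1 y) //= big1 => [|x /negbTE x_y].
    by rewrite hornerZ horner_node_poly eqxx addr0 mulfVK ?subrr ?node_prod_neq0.
  by rewrite hornerZ horner_node_poly x_y mulr0.
have := congr1 (fun q : {poly F} => q`_n.-1) (poly_eq0_at_distinct a_inj size_p p_nodes).
rewrite coef0 coefB coefXn coef_sum (_ : (n.-1 == m) = false); last by apply/eqP; lia.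
rewrite subr0 => sum_eq0; rewrite -[RHS]sum_eq0; apply: eq_bigr => x _.
by rewrite coefZ lead_node_poly mulr1.
Qed.

Section QCSAInvertible.
Variables (F : fieldType) (N L : nat) (alpha beta : 'I_N -> F) (f : 'I_L -> F).

Lemma QCSA_low i j (j_lt : (val j < L)%N) :
  QCSA alpha beta f i j = beta i / (f (Ordinal j_lt) - alpha i).
Proof.
rewrite mxE; case: insubP => [k _ k_j|]; last by rewrite j_lt.
by congr (_ / (f _ - _)); apply: val_inj.
Qed.

Lemma QCSA_high i j :
  (L <= val j)%N -> QCSA alpha beta f i j = beta i * alpha i ^+ (val j - L).
Proof. by move=> j_ge; rewrite mxE insubF // ltnNge j_ge. Qed.

Definition pole_poly : {poly F} := \prod_(k < L) ('X - (f k)%:P).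

Lemma pole_poly_split k : pole_poly = ('X - (f k)%:P) * node_poly f k.
Proof. by rewrite /pole_poly (bigD1 k). Qed.

(* Column j of QCSA is the vector of values beta_i T_j(alpha_i) / D(alpha_i),
   with D = pole_poly and T_j = -D/(X - f_j) for j < L, D X^(j-L) otherwise. *)
Definition QCSA_poly (j : 'I_N) : {poly F} :=
  match @insub nat (fun k => k < L)%N _ (val j) with
  | Some k => - node_poly f k
  | None => pole_poly * 'X^(val j - L)
  end.

Lemma QCSA_poly_low j (j_lt : (val j < L)%N) :
  QCSA_poly j = - node_poly f (Ordinal j_lt).
Proof.
rewrite /QCSA_poly; case: insubP => [k _ k_j|]; last by rewrite j_lt.
by congr (- node_poly f _); apply: val_inj.
Qed.

Lemma QCSA_poly_high j :
  (L <= val j)%N -> QCSA_poly j = pole_poly * 'X^(val j - L).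
Proof. by move=> j_ge; rewrite /QCSA_poly insubF // ltnNge j_ge. Qed.

Lemma size_QCSA_poly j : (L <= N)%N -> (size (QCSA_poly j) <= N)%N.
Proof.
move=> L_N; case: (ltnP (val j) L) => [j_lt|j_ge].
  by rewrite QCSA_poly_low size_polyN size_node_poly.
rewrite QCSA_poly_high //; apply: leq_trans (size_mul_leq _ _) _.
have size_pole : size pole_poly = L.+1.
  by rewrite /pole_poly size_prod_XsubC /index_enum -enumT size_enum_ord.
by rewrite size_pole size_polyXn addSn /=; move: j_ge (ltn_ord j) => /=; lia.
Qed.

Lemma horner_QCSA_poly i j :
  (forall k, alpha i != f k) -> beta i != 0 ->
  (QCSA_poly j).[alpha i] = pole_poly.[alpha i] / beta i * QCSA alpha beta f i j.
Proof.
move=> alpha_f beta_i; case: (ltnP (val j) L) => [j_lt|j_ge].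
  have pole_i : f (Ordinal j_lt) - alpha i != 0 by rewrite subr_eq0 eq_sym.
  rewrite QCSA_poly_low QCSA_low hornerN (pole_poly_split (Ordinal j_lt)).
  by rewrite hornerM hornerXsubC; field; rewrite pole_i beta_i.
by rewrite QCSA_poly_high // QCSA_high // hornerM hornerXn; field.
Qed.

(* The column polynomials T_j are linearly independent: evaluating a vanishing
   combination at f_k isolates the coefficient of T_k, and what remains is
   D times a polynomial with the other coefficients. *)
Lemma QCSA_poly_free (x : 'I_N -> F) :
  injective f -> (L <= N)%N -> \sum_j x j *: QCSA_poly j = 0 -> x =1 (fun=> 0).
Proof.
move=> f_inj L_N sum0.
have low0 j : (val j < L)%N -> x j = 0.
  move=> j_lt; pose k := Ordinal j_lt.
  have := congr1 (horner^~ (f k)) sum0.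
  rewrite horner0 horner_sum (bigD1 j) //= big1 => [|i i_j].
    rewrite addr0 hornerZ QCSA_poly_low hornerN horner_node_poly eqxx.
    by move/eqP; rewrite mulf_eq0 oppr_eq0 (negbTE (node_prod_neq0 _ f_inj)) orbF => /eqP.
  rewrite hornerZ; case: (ltnP (val i) L) => [i_lt|i_ge].
    rewrite QCSA_poly_low hornerN horner_node_poly.
    have -> : (Ordinal i_lt == k) = false.
      by apply/negbTE; apply: contra i_j => /eqP [] ik; apply/eqP/val_inj.
    by rewrite oppr0 mulr0.
  by rewrite QCSA_poly_high // (pole_poly_split k) !hornerM hornerXsubC subrr !mul0r mulr0.
pose Y := \sum_(j | (L <= val j)%N) x j *: 'X^(val j - L).
have sumE : \sum_j x j *: QCSA_poly j = pole_poly * Y.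
  rewrite (bigID (fun j : 'I_N => (L <= val j)%N)) /= [X in _ + X]big1 ?addr0.
    by rewrite mulr_sumr; apply: eq_bigr => j j_ge; rewrite QCSA_poly_high // scalerAr.
  by move=> j; rewrite -ltnNge => /low0 ->; rewrite scale0r.
have Y0 : Y = 0.
  have pole_neq0 : pole_poly != 0 by rewrite monic_neq0 ?monic_prod_XsubC.
  by move: sum0; rewrite sumE => /eqP; rewrite mulf_eq0 (negbTE pole_neq0) => /eqP.
move=> j; case: (ltnP (val j) L) => [/low0 //|j_ge].
have := congr1 (fun q : {poly F} => q`_(val j - L)) Y0.
rewrite coef0 coef_sum (bigD1 j) //= big1 => [|i /andP [i_ge i_j]].
  by rewrite coefZ coefXn eqxx mulr1 addr0.
rewrite coefZ coefXn (_ : (_ == _) = false) ?mulr0 //.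
by apply/negbTE; apply: contra i_j => /eqP e; apply/eqP/val_inj; move: e i_ge j_ge => /=; lia.
Qed.

(* QCSA is invertible: a kernel vector x gives the polynomial sum_j x_j T_j
   of size <= N vanishing at the N distinct alpha_i, hence x = 0. *)
Lemma QCSA_unit :
  (L <= N)%N -> injective alpha -> injective f -> (forall i k, alpha i != f k) ->
  (forall i, beta i != 0) -> QCSA alpha beta f \in unitmx.
Proof.
move=> L_N alpha_inj f_inj alpha_f beta_neq0.
rewrite unitmxE unitfE -det_tr; apply/negP => /det0P [v v_neq0 vQ].
have kernel i : \sum_j v 0 j * QCSA alpha beta f i j = 0.
  have := congr1 (fun w : 'rV_N => w 0 i) vQ; rewrite !mxE => vQ_i.
  by rewrite -[RHS]vQ_i; apply: eq_bigr => j _; rewrite !mxE.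
have sum0 : \sum_j v 0 j *: QCSA_poly j = 0.
  apply: (poly_eq0_at_distinct alpha_inj).
    apply: (big_ind (fun q : {poly F} => size q <= N)%N); rewrite ?size_poly0 //.
      by move=> q1 q2 h1 h2; apply: leq_trans (size_polyD _ _) _; rewrite geq_max h1 h2.
    by move=> j _; rewrite (leq_trans (size_scale_leq _ _)) ?size_QCSA_poly.
  move=> i; rewrite horner_sum; transitivity
    (pole_poly.[alpha i] / beta i * \sum_j v 0 j * QCSA alpha beta f i j).
    by rewrite mulr_sumr; apply: eq_bigr => j _; rewrite hornerZ horner_QCSA_poly // mulrCA.
  by rewrite kernel mulr0.
by move/negP: v_neq0; apply; apply/eqP/rowP => j; rewrite mxE (QCSA_poly_free f_inj L_N sum0).
Qed.

End QCSAInvertible.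

(* Since u_i v_i = 1 / prod_{j != i} (alpha_i - alpha_j), Lagrange's identity
   makes the Vandermonde columns of QCSA(alpha, u) and QCSA(alpha, v)
   orthogonal whenever their total degree is at most N - 2. *)
Lemma QCSA_dual_orthogonal (F : fieldType) N L (alpha u : 'I_N -> F)
    (f : 'I_L -> F) (c d : 'I_N) :
  injective alpha -> (forall i, u i != 0) ->
  (L <= c)%N -> (L <= d)%N -> (((c - L) + (d - L)).+2 <= N)%N ->
  \sum_i QCSA alpha u f i c * QCSA alpha (dual_weights alpha u) f i d = 0.
Proof.
move=> alpha_inj u_neq0 c_ge d_ge deg_lt.
rewrite -[RHS](lagrange_power_sum alpha_inj deg_lt); apply: eq_bigr => i _.
have u_i := u_neq0 i; have node_i := node_prod_neq0 i alpha_inj.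
rewrite !QCSA_high // /dual_weights -/(node_prod alpha i) exprD.
by field; rewrite u_i node_i.
Qed.

(* A column stack (G1; G2) is isotropic for the symplectic form J as soon as
   G1^T G2 = 0, since its Gram matrix is G2^T G1 - G1^T G2. *)
Lemma Jmx_isotropic_col_mx (F : fieldType) N m (G1 G2 : 'M[F]_(N, m)) :
  G1^T *m G2 = 0 -> (col_mx G1 G2)^T *m Jmx F N *m col_mx G1 G2 = 0.
Proof.
move=> G12; have G21 : G2^T *m G1 = 0 by rewrite -[G1]trmxK -trmx_mul G12 trmx0.
rewrite /Jmx tr_col_mx mul_row_block !mulmx0 !mulmx1 addr0 add0r mulmxN.
by rewrite mul_row_col mulNmx mulmx1 G12 G21 oppr0 addr0.
Qed.

Lemma rank_lsub_unit (F : fieldType) m k (G : 'M[F]_(m + k, m))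
    (H : 'M[F]_(m + k, k)) :
  row_mx G H \in unitmx -> \rank G = m.
Proof.
move=> GH_unit; apply/eqP; rewrite eqn_leq rank_leq_col /=.
have := mxrank_unit GH_unit; rewrite -mxrank_tr tr_row_mx -addsmxE.
have [rank_sum _] := mxrank_adds_leqif G^T H^T; rewrite !mxrank_tr in rank_sum.
by have := rank_leq_col H; lia.
Qed.

(* Column r < N of G is
   column L + r of Qu for r < ceil(N/2), and column L + r - ceil(N/2) of Qv
   otherwise; the columns of H are the ones picked by the selection S. *)
Definition sso_col (N L r : nat) : nat :=
  if (r < N - N./2)%N then (L + r)%N else (N + L + (r - (N - N./2)))%N.

Definition reorder_col (N L r : nat) : nat :=
  if (r < N)%N then sso_col N L r else sel_col N L (r - N).

Lemma half_bounds N : (N./2 + N./2 <= N <= N./2 + N./2 + 1)%N.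
Proof. by have := odd_double_half N; rewrite -addnn; case: (odd N) => /= <-; lia. Qed.

Lemma reorder_col_lt N L r :
  (L.*2 <= N)%N -> (r < N + N)%N -> (reorder_col N L r < N + N)%N.
Proof.
move=> L_half r_lt; move/andP: (half_bounds N); rewrite /reorder_col /sso_col /sel_col.
by move: (N./2) => h; do ! case: ifP; lia.
Qed.

Lemma reorder_col_inj N L r1 r2 : (L.*2 <= N)%N ->
  (r1 < N + N)%N -> (r2 < N + N)%N -> reorder_col N L r1 = reorder_col N L r2 -> r1 = r2.
Proof.
move=> L_half r1_lt r2_lt; move/andP: (half_bounds N).
rewrite /reorder_col /sso_col /sel_col.
by move: (N./2) => h; do ! case: ifP; lia.
Qed.

Lemma sso_col_degrees N L r1 r2 : (L.*2 <= N)%N -> (r1 < N)%N -> (r2 < N)%N ->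
  (sso_col N L r1 < N)%N -> (N <= sso_col N L r2)%N ->
  [/\ L <= sso_col N L r1, L <= sso_col N L r2 - N
    & ((sso_col N L r1 - L) + (sso_col N L r2 - N - L)).+2 <= N]%N.
Proof.
move=> L_half r1_lt r2_lt; move/andP: (half_bounds N); rewrite /sso_col.
by move: (N./2) => h; do ! case: ifP => ?; move=> ? ? ?; split; lia.
Qed.

Section ReorderPermutation.
Variables (N L : nat) (L_half : (L.*2 <= N)%N).

Definition reorder_ord (r : 'I_(N + N)) : 'I_(N + N) :=
  Ordinal (reorder_col_lt L_half (ltn_ord r)).

Lemma reorder_ord_inj : injective reorder_ord.
Proof.
move=> r1 r2 /(congr1 val) /= eq12; apply: val_inj.
exact: reorder_col_inj L_half (ltn_ord r1) (ltn_ord r2) eq12.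
Qed.

Definition reorder_perm : 'S_(N + N) := perm reorder_ord_inj.

Lemma reorder_permE r : val (reorder_perm r) = reorder_col N L r.
Proof. by rewrite permE. Qed.

Lemma selS_reorder (F : fieldType) :
  row_mx (0 : 'M[F]_N) 1%:M *m perm_mx reorder_perm = selS F N L.
Proof.
rewrite -[perm_mx _]vsubmxK mul_row_col mul0mx add0r mul1mx.
apply/matrixP => r c; rewrite !mxE -val_eqE reorder_permE /reorder_col /=.
by rewrite ltnNge leq_addr /= addKn eq_sym.
Qed.

Lemma reorder_blocks_orthogonal (F : fieldType) (Qu Qv : 'M[F]_N) :
  (forall c d : 'I_N, (L <= c)%N -> (L <= d)%N -> (((c - L) + (d - L)).+2 <= N)%N ->
     \sum_i Qu i c * Qv i d = 0) ->
  let G := lsubmx (col_perm reorder_perm (block_mx Qu 0 0 Qv)) in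
  (usubmx G)^T *m dsubmx G = 0.
Proof.
move=> Qu_Qv G.
have G_E i r : G i r = block_mx Qu 0 0 Qv i (reorder_perm (lshift N r)).
  by rewrite [LHS]mxE [LHS]mxE.
have val_col r : val (reorder_perm (lshift N r)) = sso_col N L r.
  by rewrite reorder_permE /reorder_col /= ltn_ord.
clearbody G; apply/matrixP => r1 r2; rewrite !mxE.
under eq_bigr => i _ do rewrite !mxE !G_E.
have := val_col r1; case: (split_ordP (reorder_perm (lshift N r1))) => c -> c_col.
  2: by apply: big1 => i _; rewrite block_mxEur [X in X * _]mxE mul0r.
have := val_col r2; case: (split_ordP (reorder_perm (lshift N r2))) => d -> d_col.
  by apply: big1 => i _; rewrite block_mxEdl [X in _ * X]mxE mulr0.
under eq_bigr => i _ do rewrite block_mxEul block_mxEdr.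
rewrite /= in c_col d_col.
have [] := sso_col_degrees L_half (ltn_ord r1) (ltn_ord r2).
- by rewrite -c_col.
- by rewrite -d_col leq_addr.
rewrite -c_col -d_col addKn => c_ge d_ge deg; exact: Qu_Qv.
Qed.

End ReorderPermutation.

Lemma invmx_col_perm (F : fieldType) n (s : 'S_n) (B : 'M[F]_n) :
  B \in unitmx -> invmx (col_perm s B) = perm_mx s *m invmx B.
Proof.
move=> B_unit; rewrite col_permE.
have inv : B *m perm_mx s^-1 *m (perm_mx s *m invmx B) = 1%:M.
  by rewrite mulmxA -(mulmxA B) -perm_mxM mulVg perm_mx1 mulmx1 mulmxV.
by rewrite -[LHS]mulmx1 -inv mulKmx // unitmx_mul B_unit unitmx_perm.
Qed.

Unset Implicit Arguments.

Theorem theorem1 (F : finFieldType) (N L : nat)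
    (alpha : 'I_N -> F) (f : 'I_L -> F) (u : 'I_N -> F) :
  (1 <= L)%N -> (L.*2 <= N)%N -> (N + L <= #|F|)%N ->
  injective alpha -> injective f -> (forall i j, alpha i != f j) ->
  (forall j, u j != 0) ->
  let Qu := QCSA alpha u f in
  let Qv := QCSA alpha (dual_weights alpha u) f in
  let B : 'M[F]_(N + N) := block_mx Qu 0 0 Qv in
  B \in unitmx /\
  exists G H : 'M[F]_(N + N, N),
    SSO G /\ row_mx G H \in unitmx /\
    selS F N L *m invmx B
      = row_mx (0 : 'M[F]_(N, N)) (1%:M : 'M[F]_N) *m invmx (row_mx G H).
Proof.
move=> _ L_half _ alpha_inj f_inj alpha_f u_neq0 Qu Qv B.
have L_N : (L <= N)%N by lia.
have v_neq0 j : dual_weights alpha u j != 0.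
  by rewrite mulf_neq0 ?invr_eq0 ?u_neq0 ?node_prod_neq0.
have B_unit : B \in unitmx.
  by rewrite unitmxE det_ublock unitrM -!unitmxE !QCSA_unit.
split=> //; pose M := col_perm (reorder_perm L_half) B.
have M_unit : M \in unitmx by rewrite /M col_permE unitmx_mul B_unit unitmx_perm.
exists (lsubmx M), (rsubmx M); rewrite hsubmxK; split; last split=> //.
  split; first by apply: (@rank_lsub_unit _ _ _ _ (rsubmx M)); rewrite hsubmxK.
  rewrite -[lsubmx M]vsubmxK; apply: Jmx_isotropic_col_mx.
  by apply: reorder_blocks_orthogonal => c d; apply: QCSA_dual_orthogonal.
by rewrite invmx_col_perm // mulmxA selS_reorder.
Qed.
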